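(* For $\alpha_1,\alpha_2\in\mathbb C$ let $K_2(\alpha_1,\alpha_2)$ be the complex Leibniz algebra with basis $\{l,p_+,p_-,X_1,X_2,X_3\}$ whose only nonzero products are $[l,p_+]=p_+$, $[p_+,l]=-p_+$, $[l,p_-]=-p_-$, $[p_-,l]=p_-$, $[l,l]=\alpha_1X_3$, $[p_+,p_-]=\alpha_2X_3$, $[p_-,p_+]=-\alpha_2X_3$, $[X_1,p_-]=-X_3$, $[X_1,l]=-X_1$, $[X_2,p_+]=X_3$, $[X_2,l]=X_2$. Then every algebra $K_2(\alpha_1,\alpha_2)$ is isomorphic to one of $K_2(1,1)$, $K_2(1,0)$, $K_2(0,1)$, $K_2(0,0)$, and these four algebras are pairwise non-isomorphic.
   Context: A (right) Leibniz algebra is a vector space with a bilinear bracket satisfying $[[x,y],z]=[[x,z],y]+[x,[y,z]]$. *)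

(* The complex numbers are modelled by algC
   (MathComp's algebraically closed field of characteristic 0). *)
From mathcomp Require Import all_boot all_order all_algebra all_field.
Set Implicit Arguments. Unset Strict Implicit. Unset Printing Implicit Defensive.
Import GRing.Theory.
Local Open Scope ring_scope.

(* An algebra structure on the 6-dimensional space 'rV[algC]_6 is given by
   structure constants c i j = [e_i, e_j]. *)
Definition structure_constants := 'I_6 -> 'I_6 -> 'rV[algC]_6.

Definition bracket (c : structure_constants) (u v : 'rV[algC]_6) : 'rV[algC]_6 :=
  \sum_(i < 6) \sum_(j < 6) (u 0 i * v 0 j) *: c i j.

(* Isomorphism of algebras: an invertible linear map f (given by an invertible
   matrix M acting on row vectors, f u = u *m M) with f [u,v]_B = [f u, f v]_A. *)
Definition alg_iso (A B : structure_constants) : Prop :=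
  exists M : 'M[algC]_6, M \in unitmx /\
    forall u v : 'rV[algC]_6, bracket A (u *m M) (v *m M) = bracket B u v *m M.

(* Basis vectors: e 0 = l, e 1 = p_+, e 2 = p_-, e 3 = X_1, e 4 = X_2, e 5 = X_3. *)
Definition e (k : nat) : 'rV[algC]_6 := delta_mx 0 (inord k).

Definition K2 (a1 a2 : algC) : structure_constants := fun i j =>
  match nat_of_ord i, nat_of_ord j with
  | 0, 1 => e 1
  | 1, 0 => - e 1
  | 0, 2 => - e 2
  | 2, 0 => e 2
  | 0, 0 => a1 *: e 5
  | 1, 2 => a2 *: e 5
  | 2, 1 => - (a2 *: e 5)
  | 3, 2 => - e 5
  | 3, 0 => - e 3
  | 4, 1 => e 5
  | 4, 0 => e 4
  | _, _ => 0
  end.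

(* Rescaling the basis multiplies alpha_1 and alpha_2 by arbitrary nonzero
   factors, so only the vanishing of each parameter matters.  Conversely, both
   vanishings are detected by isomorphism invariants: alpha_1 = 0 iff some x
   with [x,x] = 0 has a right multiplication fixing a nonzero vector (x = l,
   fixing X_2), and alpha_2 = 0 iff some x has left eigenvectors y, z for the
   eigenvalues 1 and -1 with [y,z] = 0 (x = l, y = p_+, z = p_-). *)

From mathcomp Require Import all_boot all_order all_algebra all_field.
From mathcomp Require Import ring.
Set Implicit Arguments. Unset Strict Implicit. Unset Printing Implicit Defensive.
Import GRing.Theory Num.Theory.
Local Open Scope ring_scope.

Local Notation co u k := (u 0 (@inord 5 k)).

Lemma row6P (w w' : 'rV[algC]_6) :
  (forall k, (k < 6)%N -> co w k = co w' k) -> w = w'.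
Proof. by move=> eq_w; apply/rowP => i; have := eq_w i (ltn_ord i); rewrite inord_val. Qed.

Lemma e_coord n m : (n < 6)%N -> (m < 6)%N -> co (e n) m = (n == m)%:R.
Proof. by move=> ltn ltm; rewrite /e mxE /= -(inj_eq val_inj) /= !inordK // eq_sym. Qed.

Lemma e_neq0 n : (n < 6)%N -> e n != 0.
Proof.
move=> ltn; apply/eqP => /(congr1 (fun w : 'rV_6 => co w n)).
by rewrite e_coord // eqxx mxE => /eqP; rewrite oner_eq0.
Qed.

Lemma bracket_coord A (u v : 'rV[algC]_6) k :
  bracket A u v 0 k = \sum_(i < 6) \sum_(j < 6) u 0 i * v 0 j * A i j 0 k.
Proof. by rewrite summxE; apply: eq_bigr => i _; rewrite summxE; apply: eq_bigr => j _; rewrite mxE. Qed.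

Lemma bracket_e A n m : (n < 6)%N -> (m < 6)%N -> bracket A (e n) (e m) = A (inord n) (inord m).
Proof.
move=> ltn ltm; rewrite /bracket (bigD1 (inord n)) //= (bigD1 (inord m)) //=.
rewrite big1 => [|j nj]; last by rewrite !mxE eqxx (negbTE nj) mulr0 scale0r.
rewrite big1 => [|i ni]; last by rewrite big1 // => j _; rewrite !mxE (negbTE ni) mul0r scale0r.
by rewrite !mxE !eqxx mulr1 scale1r !addr0.
Qed.

Lemma lift0_inord n (i : 'I_n) : lift ord0 i = inord i.+1 :> 'I_n.+1.
Proof. by apply: val_inj; rewrite /= inordK ?ltnS. Qed.

Lemma ord0_inord n : ord0 = inord 0 :> 'I_n.+1.
Proof. by apply: val_inj; rewrite /= inordK. Qed.

Lemma inord6_eq n m : (n < 6)%N -> (m < 6)%N -> (inord n == inord m :> 'I_6) = (n == m).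
Proof. by move=> ltn ltm; rewrite -(inj_eq val_inj) /= !inordK. Qed.

Section K2Bracket.
Variables (a1 a2 : algC) (u v : 'rV[algC]_6).

Ltac K2_coord := rewrite bracket_coord !big_ord_recl !big_ord0 /K2 /= !lift0_inord !inordK //
  ord0_inord ?mxE ?inord6_eq //=; ring.

Lemma K2_coord0 : co (bracket (K2 a1 a2) u v) 0 = 0.
Proof. K2_coord. Qed.
Lemma K2_coord1 : co (bracket (K2 a1 a2) u v) 1 = co u 0 * co v 1 - co u 1 * co v 0.
Proof. K2_coord. Qed.
Lemma K2_coord2 : co (bracket (K2 a1 a2) u v) 2 = co u 2 * co v 0 - co u 0 * co v 2.
Proof. K2_coord. Qed.
Lemma K2_coord3 : co (bracket (K2 a1 a2) u v) 3 = - (co u 3 * co v 0).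
Proof. K2_coord. Qed.
Lemma K2_coord4 : co (bracket (K2 a1 a2) u v) 4 = co u 4 * co v 0.
Proof. K2_coord. Qed.
Lemma K2_coord5 : co (bracket (K2 a1 a2) u v) 5 =
  a1 * (co u 0 * co v 0) + a2 * (co u 1 * co v 2 - co u 2 * co v 1)
  - co u 3 * co v 2 + co u 4 * co v 1.
Proof. K2_coord. Qed.

End K2Bracket.

Lemma alg_iso_sym A B : alg_iso A B -> alg_iso B A.
Proof.
case=> M [unitM isoM]; exists (invmx M); split; first by rewrite unitmx_inv.
move=> u v; have := isoM (u *m invmx M) (v *m invmx M).
by rewrite !mulmxKV // => ->; rewrite mulmxK.
Qed.

Lemma alg_iso_diag A B (d : 'rV[algC]_6) :
    (forall k, (k < 6)%N -> co d k != 0) ->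
    (forall u v k, (k < 6)%N ->
       co (bracket A (u *m diag_mx d) (v *m diag_mx d)) k = co (bracket B u v) k * co d k) ->
  alg_iso A B.
Proof.
move=> d_neq0 isod; exists (diag_mx d); split.
  rewrite unitmxE det_diag unitfE; apply/prodf_neq0 => i _.
  by have := d_neq0 i (ltn_ord i); rewrite inord_val.
by move=> u v; apply: row6P => k ltk; rewrite isod // mul_mx_diag mxE.
Qed.

Lemma coord_mul_diag (u d : 'rV[algC]_6) k : co (u *m diag_mx d) k = co u k * co d k.
Proof. by rewrite mul_mx_diag mxE. Qed.

Lemma K2_scale a1 a2 (t s : algC) : t != 0 -> s != 0 -> alg_iso (K2 (t * a1) (s * a2)) (K2 a1 a2).
Proof.
move=> t_neq0 s_neq0.
(* p_+ |-> (t/s) p_+, X_1 |-> t X_1, X_2 |-> s X_2, X_3 |-> t X_3 *)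
apply: (@alg_iso_diag _ _ (\row_(i < 6) [:: 1; t / s; 1; t; s; t]`_i)) => [k|u v k] ltk.
  rewrite mxE inordK //; case: k ltk => [|[|[|[|[|[|k]]]]]] //= _.
  - exact: oner_neq0.
  - by rewrite mulf_neq0 ?invr_eq0.
  - exact: oner_neq0.
case: k ltk => [|[|[|[|[|[|k]]]]]] //= _.
all: rewrite ?K2_coord0 ?K2_coord1 ?K2_coord2 ?K2_coord3 ?K2_coord4 ?K2_coord5.
all: rewrite ?coord_mul_diag !mxE !inordK //=; by field.
Qed.

Lemma K2_iso_normal a1 a2 : alg_iso (K2 a1 a2) (K2 (a1 != 0)%:R (a2 != 0)%:R).
Proof.
have factor a : exists2 t : algC, t != 0 & a = t * (a != 0)%:R.
  case: eqVneq => [->|a_neq0]; first by exists 1; rewrite ?oner_eq0 ?mulr0.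
  by exists a; rewrite ?mulr1.
have [t t_neq0 Ea1] := factor a1; have [s s_neq0 Ea2] := factor a2.
by rewrite {1}Ea1 {1}Ea2; apply: K2_scale.
Qed.

Lemma K2_classification a1 a2 :
  alg_iso (K2 a1 a2) (K2 1 1) \/ alg_iso (K2 a1 a2) (K2 1 0) \/
  alg_iso (K2 a1 a2) (K2 0 1) \/ alg_iso (K2 a1 a2) (K2 0 0).
Proof. by have := K2_iso_normal a1 a2; case: (a1 != 0); case: (a2 != 0); tauto. Qed.

Definition square_zero_right_fixes (A : structure_constants) : Prop :=
  exists x y : 'rV[algC]_6, bracket A x x = 0 /\ bracket A y x = y /\ y <> 0.

Definition annihilating_left_eigvecs (A : structure_constants) : Prop :=
  exists x y z : 'rV[algC]_6, bracket A x y = y /\ bracket A x z = - z /\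
    bracket A y z = 0 /\ y <> 0 /\ z <> 0.

Lemma mulmx_unit_neq0 (M : 'M[algC]_6) (y : 'rV_6) : M \in unitmx -> y <> 0 -> y *m M <> 0.
Proof. by move=> unitM y_neq0 /eqP; rewrite mulmx_free_eq0 ?row_free_unit // => /eqP. Qed.

Lemma square_zero_right_fixes_transfer A B :
  alg_iso A B -> square_zero_right_fixes B -> square_zero_right_fixes A.
Proof.
case=> M [unitM isoM] [x [y [sq [fixed y_neq0]]]].
exists (x *m M), (y *m M); rewrite !isoM sq fixed mul0mx.
by do !split; apply: mulmx_unit_neq0.
Qed.

Lemma annihilating_left_eigvecs_transfer A B :
  alg_iso A B -> annihilating_left_eigvecs B -> annihilating_left_eigvecs A.
Proof.
case=> M [unitM isoM] [x [y [z [xy [xz [yz [y_neq0 z_neq0]]]]]]].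
exists (x *m M), (y *m M), (z *m M); rewrite !isoM xy xz yz mul0mx mulNmx.
by do !split; apply: mulmx_unit_neq0.
Qed.

Lemma square_zero_right_fixes_iso A B :
  alg_iso A B -> square_zero_right_fixes A <-> square_zero_right_fixes B.
Proof.
move=> iso; split; apply: square_zero_right_fixes_transfer => //.
exact: alg_iso_sym.
Qed.

Lemma annihilating_left_eigvecs_iso A B :
  alg_iso A B -> annihilating_left_eigvecs A <-> annihilating_left_eigvecs B.
Proof.
move=> iso; split; apply: annihilating_left_eigvecs_transfer => //.
exact: alg_iso_sym.
Qed.

Section K2Invariants.
Variables a1 a2 : algC.
Local Notation br := (bracket (K2 a1 a2)).

Lemma K2_square_zero (x : 'rV[algC]_6) : a1 != 0 -> br x x = 0 -> co x 0 = 0.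
Proof.
move=> a1_neq0 sq; have sqk k : co (br x x) k = 0 by rewrite sq mxE.
have x30 : co x 3 * co x 0 = 0 by apply/eqP; rewrite -oppr_eq0 -(K2_coord3 a1 a2) sqk.
have x40 : co x 4 * co x 0 = 0 by rewrite -(K2_coord4 a1 a2) sqk.
have : a1 * co x 0 ^+ 3 =
    co x 0 * co (br x x) 5 + co x 2 * (co x 3 * co x 0) - co x 1 * (co x 4 * co x 0).
  by rewrite K2_coord5; ring.
rewrite sqk x30 x40 !mulr0 subr0 addr0 => /eqP.
by rewrite mulf_eq0 (negbTE a1_neq0) expf_eq0 => /andP[_ /eqP].
Qed.

Lemma K2_right_fixed (x y : 'rV[algC]_6) : co x 0 = 0 -> br y x = y -> y = 0.
Proof.
move=> x0 fixed; have fixedk k : co y k = co (br y x) k by rewrite fixed.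
have y0 : co y 0 = 0 by rewrite fixedk K2_coord0.
have y1 : co y 1 = 0 by rewrite fixedk K2_coord1 x0 y0; ring.
have y2 : co y 2 = 0 by rewrite fixedk K2_coord2 x0 y0; ring.
have y3 : co y 3 = 0 by rewrite fixedk K2_coord3 x0; ring.
have y4 : co y 4 = 0 by rewrite fixedk K2_coord4 x0; ring.
have y5 : co y 5 = 0 by rewrite fixedk K2_coord5 x0 y1 y2 y3 y4; ring.
by apply: row6P => -[|[|[|[|[|[|k]]]]]] //= _; rewrite mxE.
Qed.

Lemma K2_square_zero_right_fixes : square_zero_right_fixes (K2 a1 a2) <-> a1 = 0.
Proof.
split=> [[x [y [sq [fixed y_neq0]]]]|a1_eq0].
  case: (eqVneq a1 0) => // a1_neq0; case: y_neq0.
  exact: K2_right_fixed (K2_square_zero a1_neq0 sq) fixed.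
exists (e 0), (e 4); rewrite !bracket_e // /K2 !inordK //= a1_eq0 scale0r.
by do !split; apply/eqP/e_neq0.
Qed.

Lemma K2_left_eigvec c (x y : 'rV[algC]_6) : c != 0 -> br x y = c *: y ->
  [/\ co y 0 = 0, co y 3 = 0, co y 4 = 0,
      (co x 0 - c) * co y 1 = 0 & (co x 0 + c) * co y 2 = 0].
Proof.
move=> c_neq0 eig; have eigk k : co (br x y) k = c * co y k by rewrite eig mxE.
have cancel_c t : c * t = 0 -> t = 0 by move/eqP; rewrite mulf_eq0 (negbTE c_neq0) => /eqP.
have y0 : co y 0 = 0 by apply: cancel_c; rewrite -eigk K2_coord0.
split=> //.
- by apply: cancel_c; rewrite -eigk K2_coord3 y0; ring.
- by apply: cancel_c; rewrite -eigk K2_coord4 y0; ring.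
- by apply/eqP; rewrite mulrBl subr_eq0 -eigk K2_coord1 y0; apply/eqP; ring.
- by apply/eqP; rewrite mulrDl addr_eq0 -eigk K2_coord2 y0; apply/eqP; ring.
Qed.

Lemma K2_left_eigvec_eq0 c (x y : 'rV[algC]_6) :
  c != 0 -> br x y = c *: y -> co y 1 = 0 -> co y 2 = 0 -> y = 0.
Proof.
move=> c_neq0 eig y1 y2; have [y0 y3 y4 _ _] := K2_left_eigvec c_neq0 eig.
have e5 : c * co y 5 = co (br x y) 5 by rewrite eig mxE.
have : c * co y 5 = 0 by rewrite e5 K2_coord5 y0 y1 y2; ring.
move/eqP; rewrite mulf_eq0 (negbTE c_neq0) => /eqP y5.
by apply: row6P => -[|[|[|[|[|[|k]]]]]] //= _; rewrite mxE.
Qed.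

Lemma K2_annihilating_left_eigvecs : annihilating_left_eigvecs (K2 a1 a2) <-> a2 = 0.
Proof.
split=> [[x [y [z [xy [xz [yz [y_neq0 z_neq0]]]]]]]|a2_eq0]; last first.
  exists (e 0), (e 1), (e 2); rewrite !bracket_e // /K2 !inordK //= a2_eq0 scale0r.
  by do !split; apply/eqP/e_neq0.
case: (eqVneq a2 0) => // a2_neq0; exfalso.
have m1_neq0 : (-1 : algC) != 0 by rewrite oppr_eq0 oner_eq0.
have {}xy : br x y = 1 *: y by rewrite scale1r.
have {}xz : br x z = -1 *: z by rewrite scaleN1r.
have [y0 y3 y4 ey1 ey2] := K2_left_eigvec (oner_neq0 _) xy.
have [_ _ _ ez1 ez2] := K2_left_eigvec m1_neq0 xz.
have : a2 * (co y 1 * co z 2 - co y 2 * co z 1) = co (br y z) 5.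
  by rewrite K2_coord5 y0 y3 y4; ring.
rewrite yz mxE => /eqP; rewrite mulf_eq0 (negbTE a2_neq0) subr_eq0 => /eqP yz5.
have cancel_nz (t u : algC) : t != 0 -> t * u = 0 -> u = 0.
  by move=> t_neq0 /eqP; rewrite mulf_eq0 (negbTE t_neq0) => /eqP.
have y_nz := K2_left_eigvec_eq0 (oner_neq0 _) xy; have z_nz := K2_left_eigvec_eq0 m1_neq0 xz.
have two_neq0 : (1 + 1 : algC) != 0 by rewrite -mulr2n pnatr_eq0.
case: (eqVneq (co x 0) 1) => [x0 | x0_neq1].
- have y2 : co y 2 = 0 by apply: cancel_nz ey2; rewrite x0.
  have z1 : co z 1 = 0 by apply: cancel_nz ez1; rewrite x0 opprK.
  move: yz5; rewrite y2 z1 mulr0 => /eqP; rewrite mulf_eq0 => /orP[] /eqP.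
  + by move=> y1; apply: y_neq0; apply: y_nz.
  + by move=> z2; apply: z_neq0; apply: z_nz.
- have x0B1_neq0 : co x 0 - 1 != 0 by rewrite subr_eq0.
  have y1 : co y 1 = 0 by apply: cancel_nz ey1.
  have z2 : co z 2 = 0 by apply: cancel_nz ez2.
  move: yz5; rewrite y1 z2 mul0r => /esym/eqP; rewrite mulf_eq0 => /orP[] /eqP.
  + by move=> y2; apply: y_neq0; apply: y_nz.
  + by move=> z1; apply: z_neq0; apply: z_nz.
Qed.

End K2Invariants.

Lemma alg_iso_K2_eq0 a1 a2 b1 b2 :
  alg_iso (K2 a1 a2) (K2 b1 b2) -> (a1 = 0 <-> b1 = 0) /\ (a2 = 0 <-> b2 = 0).
Proof.
move=> iso; rewrite -(K2_square_zero_right_fixes a1 a2) -(K2_square_zero_right_fixes b1 b2).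
rewrite -(K2_annihilating_left_eigvecs a1 a2) -(K2_annihilating_left_eigvecs b1 b2).
by rewrite (square_zero_right_fixes_iso iso) (annihilating_left_eigvecs_iso iso).
Qed.

Theorem mainTheorem5 :
  (forall a1 a2 : algC,
      alg_iso (K2 a1 a2) (K2 1 1) \/ alg_iso (K2 a1 a2) (K2 1 0) \/
      alg_iso (K2 a1 a2) (K2 0 1) \/ alg_iso (K2 a1 a2) (K2 0 0)) /\
  ~ alg_iso (K2 1 1) (K2 1 0) /\ ~ alg_iso (K2 1 1) (K2 0 1) /\
  ~ alg_iso (K2 1 1) (K2 0 0) /\ ~ alg_iso (K2 1 0) (K2 0 1) /\
  ~ alg_iso (K2 1 0) (K2 0 0) /\ ~ alg_iso (K2 0 1) (K2 0 0).
Proof.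
have one_neq0 : (1 : algC) <> 0 by apply/eqP; exact: oner_neq0.
split; first exact: K2_classification.
by do !split; move/alg_iso_K2_eq0; tauto.
Qed.
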